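(* Let $n\ge 2$ and let $P_n$ be the path on $n$ vertices. Then $$\tau(P_n)=\begin{cases}1 & \text{if } n\equiv 0 \pmod 4,\\ \lfloor n/4\rfloor & \text{if } n\equiv 1 \pmod 4,\\ (\lfloor n/4\rfloor+1)^2 & \text{if } n\equiv 2 \pmod 4,\\ \lfloor n/4\rfloor+2 & \text{if } n\equiv 3 \pmod 4.\end{cases}$$
   Context: A set $D \subseteq V(G)$ is a total dominating set of a graph $G$ if every vertex of $G$ has a neighbor in $D$. $\gamma_t(G)$ is the minimum cardinality of a total dominating set; a minimum one is a $\gamma_t(G)$-set, and $\tau(G)$ is the number of $\gamma_t(G)$-sets. *)

From mathcomp Require Import all_boot.
Set Implicit Arguments. Unset Strict Implicit. Unset Printing Implicit Defensive.

(* A simple graph is a symmetric irreflexive relation [e] on a finite type. *)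

Definition is_tds (T : finType) (e : rel T) (D : {set T}) : bool :=
  [forall v : T, [exists u in D, e v u]].

(* gamma_t(G): the minimum cardinality of a total dominating set
   (defined as the min over all TDSs; if none exists the value is #|T|). *)
Definition gamma_t (T : finType) (e : rel T) : nat :=
  \big[minn/#|T|]_(D : {set T} | is_tds e D) #|D|.

Definition is_gamma_t_set (T : finType) (e : rel T) (D : {set T}) : bool :=
  is_tds e D && (#|D| == gamma_t e).

Definition tau (T : finType) (e : rel T) : nat :=
  #|[set D : {set T} | is_gamma_t_set e D]|.

Definition path_rel (n : nat) : rel 'I_n :=
  fun i j => (i.+1 == j :> nat) || (j.+1 == i :> nat).
Arguments path_rel n : clear implicits.

(* A set of vertices of P_n is a bit string of length n, and total domination is
   a condition on windows of three consecutive bits, so the number of total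
   dominating sets of each size obeys a recursion in n indexed by the two leading
   bits.  For gamma_t and tau only the least size with a nonzero count and that
   count matter, and such (size, count) pairs add like a min-plus semiring with
   multiplicities.  In these terms, for n = 4p + r the state of the recursion is a
   fixed table of expressions in p depending only on r, from which tau(P_n) is
   read off. *)

From mathcomp Require Import all_boot zify.
Set Implicit Arguments. Unset Strict Implicit. Unset Printing Implicit Defensive.

Definition lowest (f : nat -> nat) (mc : nat * nat) : Prop :=
  forall k, k <= mc.1 -> f k = (k == mc.1) * mc.2.

Definition merge (x y : nat * nat) : nat * nat :=
  if x.1 < y.1 then x else if y.1 < x.1 then y else (x.1, x.2 + y.2).

Lemma lowest_add f g x y :
  lowest f x -> lowest g y -> lowest (fun k => f k + g k) (merge x y).
Proof.
case: x y => [m1 c1] [m2 c2] hf hg k; rewrite /merge /=.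
case: ltngtP => h /= hk; rewrite hf ?hg; try lia.
all: by case: (k =P m1); case: (k =P m2) => /=; lia.
Qed.

Lemma merge_same m c1 c2 : merge (m, c1) (m, c2) = (m, c1 + c2).
Proof. by rewrite /merge /= ltnn. Qed.

Lemma merge_lt m1 c1 m2 c2 : m1 < m2 -> merge (m1, c1) (m2, c2) = (m1, c1).
Proof. by rewrite /merge /= => ->. Qed.

Lemma lowest_succ f m c :
  f 0 = 0 -> lowest (fun k => f k.+1) (m, c) -> lowest f (m.+1, c).
Proof. by move=> f0 hf [|k] hk //; rewrite hf. Qed.

Lemma geq_bigminn (I : finType) (P : pred I) (F : I -> nat) x j :
  P j -> \big[minn/x]_(i | P i) F i <= F j.
Proof.
move=> Pj; have : j \in index_enum I by rewrite mem_index_enum.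
elim: (index_enum I) => // i r IHr; rewrite inE big_cons => /orP [/eqP <-|jr].
  by rewrite Pj geq_minl.
by case: (P i); rewrite ?geq_min IHr ?orbT.
Qed.

Section TotalDomination.
Variables (T : finType) (e : rel T).

Definition tds_count (k : nat) : nat := #|[set D | is_tds e D && (#|D| == k)]|.

Variables m c : nat.
Hypotheses (hlow : lowest tds_count (m, c)) (c_gt0 : 0 < c).

Lemma gamma_t_lowest : gamma_t e = m.
Proof.
have [D0] : exists D0, is_tds e D0 && (#|D0| == m).
  have : 0 < tds_count m by rewrite hlow //= eqxx mul1n.
  by rewrite card_gt0 => /set0Pn [D0]; rewrite inE; exists D0.
case/andP=> tds0 /eqP sz0; apply/eqP; rewrite eqn_leq; apply/andP; split.
  by rewrite -sz0; apply: geq_bigminn.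
apply: (big_ind (leq m)) => [|x y hx hy|D tdsD]; first by rewrite -sz0 max_card.
  by rewrite leq_min hx hy.
rewrite leqNgt; apply/negP => ltDm.
have : tds_count #|D| = 0 by rewrite hlow ?(ltnW ltDm) // ltn_eqF.
by move/eqP; rewrite cards_eq0 => /eqP /setP /(_ D); rewrite !inE tdsD eqxx.
Qed.

Lemma tau_lowest : tau e = c.
Proof.
have -> : c = tds_count m by rewrite hlow //= eqxx mul1n.
by apply: eq_card => D; rewrite !inE /is_gamma_t_set gamma_t_lowest.
Qed.

End TotalDomination.

Fixpoint bitseqs (n : nat) : seq (seq bool) :=
  if n is n'.+1 then map (cons true) (bitseqs n') ++ map (cons false) (bitseqs n')
  else [:: [::]].

Lemma count_bitseqsS n (P : pred (seq bool)) :
  count P (bitseqs n.+1) =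
  count (fun s => P (true :: s)) (bitseqs n) + count (fun s => P (false :: s)) (bitseqs n).
Proof. by rewrite /= count_cat !count_map. Qed.

Lemma mem_map_cons (b c : bool) s L : (b :: s \in map (cons c) L) = (b == c) && (s \in L).
Proof.
apply/mapP/andP => [[t Ht [-> ->]]|[/eqP -> Hs]]; last by exists s.
by rewrite eqxx.
Qed.

Lemma mem_bitseqs n s : (s \in bitseqs n) = (size s == n).
Proof.
elim: n s => [|n IHn] [|b s] //=; rewrite mem_cat ?mem_map_cons.
- by case: orP => // -[] /mapP [].
- by rewrite IHn eqSS; case: b; rewrite ?orbF.
Qed.

Lemma uniq_bitseqs n : uniq (bitseqs n).
Proof.
elim: n => //= n IHn; rewrite cat_uniq !map_inj_uniq ?IHn //=; try by move=> ? ? [].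
by rewrite andbT; apply/hasPn => s /mapP [t _ ->]; rewrite mem_map_cons.
Qed.

(* [dom_tail s]: every position of [s] but the first has a [true] neighbour. *)
Fixpoint dom_tail (s : seq bool) : bool :=
  if s is x :: ((y :: t) as s') then (x || head false t) && dom_tail s' else true.

Definition tds_bits (s : seq bool) : bool := dom_tail s && nth false s 1.

Lemma dom_tailE s :
  dom_tail s = all (fun i => nth false s i.-1 || nth false s i.+1) (iota 1 (size s).-1).
Proof.
elim: s => [|x s IHs] //; case: s IHs => [|y t] IHs //.
have -> : dom_tail [:: x, y & t] = (x || head false t) && dom_tail (y :: t) by [].
rewrite IHs /= -[2]/(1 + 1) iotaDl all_map.
by congr (_ && _); apply: eq_in_all => -[|i] //; rewrite mem_iota.
Qed.

Lemma tds_bitsP s : 0 < size s ->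
  reflect (forall i, i < size s -> (0 < i) && nth false s i.-1 || nth false s i.+1)
          (tds_bits s).
Proof.
move=> s_gt0; rewrite /tds_bits dom_tailE.
apply: (iffP andP) => [[/allP dom s1] [|i] lti | dom]; first by rewrite s1 orbT.
  by apply: dom; rewrite mem_iota; lia.
split; last by have := dom 0 s_gt0.
apply/allP => i; rewrite mem_iota => /andP [i_gt0 ltis].
by have := dom i; rewrite i_gt0; apply; lia.
Qed.

Section PathBits.
Variable N : nat.

Definition bits_of_set (D : {set 'I_N}) : seq bool := [seq x \in D | x <- enum 'I_N].

Lemma size_bits_of_set D : size (bits_of_set D) = N.
Proof. by rewrite size_map size_enum_ord. Qed.

Lemma nth_bits_of_set D (x : 'I_N) : nth false (bits_of_set D) x = (x \in D).
Proof. by rewrite (nth_map x) ?size_enum_ord // nth_ord_enum. Qed.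

Lemma count_bits_of_set D : count id (bits_of_set D) = #|D|.
Proof. by rewrite count_map cardE size_filter -enumT. Qed.

Lemma bits_of_set_inj : injective bits_of_set.
Proof. by move=> D1 D2 eqD; apply/setP => x; rewrite -!nth_bits_of_set eqD. Qed.

Lemma card_bits_of_set (P : pred (seq bool)) :
  #|[set D | P (bits_of_set D)]| = count P (bitseqs N).
Proof.
rewrite cardE -size_filter -(size_map bits_of_set); apply: perm_size.
apply: uniq_perm; first by rewrite (map_inj_uniq bits_of_set_inj) enum_uniq.
  by rewrite filter_uniq // uniq_bitseqs.
move=> s; rewrite mem_filter mem_bitseqs; apply/mapP/andP => [[D PD ->] | [Ps /eqP sz_s]].
  by rewrite mem_enum inE in PD; rewrite PD size_bits_of_set.
have s_bits : s = bits_of_set [set x : 'I_N | nth false s x].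
  apply: (@eq_from_nth _ false) => [|i]; rewrite ?size_bits_of_set ?sz_s // => ltiN.
  by rewrite -[i]/(nat_of_ord (Ordinal ltiN)) nth_bits_of_set inE.
by exists [set x : 'I_N | nth false s x]; rewrite // mem_enum inE -s_bits.
Qed.

Lemma is_tds_path_bits D : 0 < N -> is_tds (path_rel N) D = tds_bits (bits_of_set D).
Proof.
move=> N_gt0; apply/forallP/tds_bitsP; rewrite ?size_bits_of_set //.
  move=> dom i ltiN.
  have /existsP [u /andP [uD /orP [/eqP iu | /eqP ui]]] := dom (Ordinal ltiN).
    by rewrite /= iu nth_bits_of_set uD orbT.
  by move: ui => /= <-; rewrite nth_bits_of_set uD.
move=> dom v; case/orP: (dom v (ltn_ord v)) => [/andP [v_gt0 Dv] | Dv]; apply/existsP.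
  have ltvN : v.-1 < N by have := ltn_ord v; lia.
  exists (Ordinal ltvN); rewrite -(nth_bits_of_set D (Ordinal ltvN)) Dv.
  by rewrite /path_rel /= prednK // eqxx orbT.
have [ltvN | geNv] := ltnP v.+1 N; last by rewrite nth_default ?size_bits_of_set in Dv.
exists (Ordinal ltvN).
by rewrite -(nth_bits_of_set D (Ordinal ltvN)) Dv /path_rel /= eqxx.
Qed.

End PathBits.

Definition dom_ext (a b : bool) (n k : nat) : nat :=
  count (fun t => dom_tail [:: a, b & t] && (count id [:: a, b & t] == k)) (bitseqs n).

Lemma dom_ext_false a n k : dom_ext false a n.+1 k = dom_ext a true n k.
Proof.
rewrite /dom_ext count_bitseqsS [X in _ + X](@eq_count _ _ pred0) ?count_pred0 ?addn0 //.
Qed.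

Lemma dom_ext_true0 a n : dom_ext true a n.+1 0 = 0.
Proof. by rewrite /dom_ext (@eq_count _ _ pred0) ?count_pred0 // => t /=; rewrite andbF. Qed.

Lemma dom_ext_trueS a n k :
  dom_ext true a n.+1 k.+1 = dom_ext a true n k + dom_ext a false n k.
Proof.
by rewrite /dom_ext count_bitseqsS; congr (_ + _); apply: eq_count => t /=; rewrite add1n eqSS.
Qed.

Lemma tds_count_path n k :
  tds_count (path_rel n.+2) k = dom_ext false true n k + dom_ext true true n k.
Proof.
have -> : tds_count (path_rel n.+2) k =
    #|[set D : {set 'I_n.+2} | tds_bits (bits_of_set D) && (count id (bits_of_set D) == k)]|.
  by apply: eq_card => D; rewrite !inE is_tds_path_bits // count_bits_of_set.
rewrite (@card_bits_of_set n.+2 (fun s => tds_bits s && (count id s == k))).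
have tds_false a :
    count (fun s => tds_bits [:: a, false & s] && (count id [:: a, false & s] == k))
          (bitseqs n) = 0.
  by rewrite (@eq_count _ _ pred0) ?count_pred0 // => s; rewrite /tds_bits /= andbF.
have tds_true a :
    count (fun s => tds_bits [:: a, true & s] && (count id [:: a, true & s] == k))
          (bitseqs n) = dom_ext a true n k.
  by apply: eq_count => s; rewrite /tds_bits [nth _ _ 1]/= andbT.
by rewrite !count_bitseqsS !tds_false !tds_true !addn0 addnC.
Qed.

Definition lowest_next (st : bool -> bool -> nat * nat) (a b : bool) : nat * nat :=
  if a then let x := merge (st b true) (st b false) in (x.1.+1, x.2) else st b true.

Definition dom_ext_lowest (n : nat) (st : bool -> bool -> nat * nat) : Prop :=
  forall a b, lowest (dom_ext a b n) (st a b).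

Lemma dom_ext_lowest_next n st : dom_ext_lowest n st -> dom_ext_lowest n.+1 (lowest_next st).
Proof.
move=> hst [] b k; rewrite /lowest_next; last by rewrite dom_ext_false; apply: hst.
apply: lowest_succ (dom_ext_true0 _ _) _ k => k hk.
by rewrite dom_ext_trueS; apply: lowest_add.
Qed.

(* Found by running [lowest_next] from [n = 0]; it repeats with period 4 in [n]
   up to the shift [p -> p.+1]. *)
Definition lowest_table (r p : nat) (a b : bool) : nat * nat :=
  match r, a, b with
  | 0, false, false => (2*p + 1, p)
  | 0, false, true  => (2*p + 2, p * (p + 1))
  | 0, true,  false => (2*p + 1, 1)
  | 0, true,  true  => (2*p + 2, p + 1)
  | 1, false, false => (2*p + 2, p * (p + 1))
  | 1, false, true  => (2*p + 2, p + 1)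
  | 1, true,  false => (2*p + 2, p)
  | 1, true,  true  => (2*p + 2, 1)
  | 2, false, false => (2*p + 2, p + 1)
  | 2, false, true  => (2*p + 2, 1)
  | 2, true,  false => (2*p + 3, (p + 1) ^ 2)
  | 2, true,  true  => (2*p + 3, p + 1)
  | _, false, false => (2*p + 2, 1)
  | _, false, true  => (2*p + 3, p + 1)
  | _, true,  false => (2*p + 3, p + 2)
  | _, true,  true  => (2*p + 4, (p + 1) * (p + 2))
  end.

Lemma lowest_next_table r p : r < 3 -> lowest_next (lowest_table r p) =2 lowest_table r.+1 p.
Proof.
case: r => [|[|[|//]]] _ [] [];
  rewrite /lowest_next /merge /=; do ?[case: ltnP => ? /=]; congr (_, _); nia.
Qed.

Lemma lowest_next_table_wrap p : lowest_next (lowest_table 3 p) =2 lowest_table 0 p.+1.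
Proof.
case=> [] []; rewrite /lowest_next /merge /=; do ?[case: ltnP => ? /=]; congr (_, _); nia.
Qed.

Lemma eq_dom_ext_lowest n st st' : st =2 st' -> dom_ext_lowest n st -> dom_ext_lowest n st'.
Proof. by move=> eq_st hst a b; rewrite -eq_st. Qed.

Lemma dom_ext_lowest_table p r : r < 4 -> dom_ext_lowest (p * 4 + r) (lowest_table r p).
Proof.
have from0 q : dom_ext_lowest (q * 4) (lowest_table 0 q) ->
               forall s, s < 4 -> dom_ext_lowest (q * 4 + s) (lowest_table s q).
  move=> h0; elim=> [|s IHs] lts4; first by rewrite addn0.
  rewrite addnS; apply: eq_dom_ext_lowest (lowest_next_table _ _) (dom_ext_lowest_next (IHs _)); lia.
elim: p r => [|p IHp]; apply: from0; first by case=> [] [] [|[|[|k]]].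
rewrite mulSn addnC -[4]/(3.+1) addnS.
exact: eq_dom_ext_lowest (lowest_next_table_wrap p) (dom_ext_lowest_next (IHp 3 _)).
Qed.

Lemma tau_path_lowest n st : dom_ext_lowest n st ->
  0 < (merge (st false true) (st true true)).2 ->
  tau (path_rel n.+2) = (merge (st false true) (st true true)).2.
Proof.
move=> hst; apply: tau_lowest => k hk.
by rewrite tds_count_path; apply: lowest_add.
Qed.

Theorem theorem5p1 (n : nat) (hn : 2 <= n) :
  tau (path_rel n) =
    if n %% 4 == 0 then 1
    else if n %% 4 == 1 then n %/ 4
    else if n %% 4 == 2 then (n %/ 4 + 1) ^ 2
    else n %/ 4 + 2.
Proof.
case: n hn => [|[|m]] // _.
have [p [r [ltr4 ->]]] : exists p r, r < 4 /\ m = p * 4 + r.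
  by exists (m %/ 4), (m %% 4); rewrite ltn_mod -divn_eq.
rewrite (tau_path_lowest (dom_ext_lowest_table (p := p) ltr4)); first
  rewrite -(addn2 (p * 4 + r)) -addnA modnMDl divnMDl //.
all: case: r ltr4 => [|[|[|[|//]]]] _; rewrite /= ?merge_same ?merge_lt /=; nia.
Qed.
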